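(* Let a group $G$ act geometrically on a systolic complex $X$ and let $h\in G$ be a hyperbolic isometry. Then for every integer $K\ge L(h)$ the centraliser $C_G(h)$ leaves $\mathrm{Disp}_K(h)$ invariant and acts geometrically (properly and cocompactly) on the subcomplex $\mathrm{Disp}_K(h)\subset X$.
   Context: $X$ is a systolic complex (simply connected simplicial complex with flag, $6$-large vertex links, where $6$-large means every embedded cycle of length $4$ or $5$ has a diagonal), with the combinatorial metric $d$ on vertices. A geometric action is by simplicial automorphisms, with finite vertex stabilisers, and cocompact. An isometry $h$ is hyperbolic if it fixes no simplex of $X$. $L(h)=\min_x d(x,hx)$ over vertices $x$. For $K\ge L(h)$, $\mathrm{Disp}_K(h)$ is the subcomplex spanned by all vertices $x$ with $d(x,hx)\le K$. *)

(* A systolic complex is flag, hence determined by its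
   1-skeleton: we represent X by a graph (adj) on a vertex type V; the
   simplices of X are the nonempty finite cliques. *)
From Stdlib Require Import List Arith Relations.
Import ListNotations.

Section Defs.
Context {V G : Type}.

Definition simple_graph (adj : V -> V -> Prop) : Prop :=
  (forall x y, adj x y -> adj y x) /\ (forall x, ~ adj x x).

(* simplices of the flag complex: nonempty lists of pairwise adjacent vertices
   (a simplex is the underlying vertex set of the list) *)
Definition is_simplex (adj : V -> V -> Prop) (s : list V) : Prop :=
  s <> [] /\ forall x y, In x s -> In y s -> x = y \/ adj x y.

Definition is_simplex_in (adj : V -> V -> Prop) (Y : V -> Prop) (s : list V) : Prop :=
  is_simplex adj s /\ forall x, In x s -> Y x.

Inductive walk (adj : V -> V -> Prop) : nat -> V -> V -> Prop :=
| walk_nil x : walk adj 0 x x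
| walk_cons n x y z : adj x y -> walk adj n y z -> walk adj (S n) x z.

Definition dist_le (adj : V -> V -> Prop) (x y : V) (K : nat) : Prop :=
  exists n, n <= K /\ walk adj n x y.

Definition is_dist (adj : V -> V -> Prop) (x y : V) (n : nat) : Prop :=
  walk adj n x y /\ forall m, walk adj m x y -> n <= m.

Definition connected (adj : V -> V -> Prop) : Prop :=
  forall x y, exists n, walk adj n x y.

Fixpoint is_edge_path (adj : V -> V -> Prop) (l : list V) : Prop :=
  match l with
  | x :: ((y :: _) as t) => adj x y /\ is_edge_path adj t
  | _ => True
  end.

Inductive elem_move (adj : V -> V -> Prop) : list V -> list V -> Prop :=
| move_backtrack l1 l2 a b :
    adj a b -> elem_move adj (l1 ++ [a; b; a] ++ l2) (l1 ++ [a] ++ l2)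
| move_triangle l1 l2 a b c :
    adj a b -> adj b c -> adj a c ->
    elem_move adj (l1 ++ [a; b; c] ++ l2) (l1 ++ [a; c] ++ l2).

Definition edge_homotopic (adj : V -> V -> Prop) : list V -> list V -> Prop :=
  clos_refl_sym_trans (list V) (elem_move adj).

Definition simply_connected (adj : V -> V -> Prop) : Prop :=
  connected adj /\
  forall (v : V) (t : list V), is_edge_path adj (v :: t) -> last (v :: t) v = v ->
    edge_homotopic adj (v :: t) [v].

(* every embedded cycle of length 4 or 5 in the link of every vertex
   (= full subcomplex on its neighbours) has a diagonal *)
Definition six_large_links (adj : V -> V -> Prop) : Prop :=
  forall (v : V) (n : nat) (w : nat -> V), (n = 4 \/ n = 5) ->
    (forall i, i < n -> adj v (w i)) ->
    (forall i j, i < n -> j < n -> w i = w j -> i = j) ->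
    (forall i, i < n -> adj (w i) (w (S i mod n))) ->
    exists i j, i < n /\ j < n /\ i <> j /\ j <> S i mod n /\ i <> S j mod n /\
      adj (w i) (w j).

Definition systolic (adj : V -> V -> Prop) : Prop :=
  simple_graph adj /\ simply_connected adj /\ six_large_links adj.

Definition is_group (mul : G -> G -> G) (one : G) (inv : G -> G) : Prop :=
  (forall a b c, mul a (mul b c) = mul (mul a b) c) /\
  (forall a, mul one a = a /\ mul a one = a) /\
  (forall a, mul (inv a) a = one /\ mul a (inv a) = one).

Definition is_simplicial_action (mul : G -> G -> G) (one : G)
    (adj : V -> V -> Prop) (act : G -> V -> V) : Prop :=
  (forall x, act one x = x) /\
  (forall g h x, act (mul g h) x = act g (act h x)) /\
  (forall g x y, adj x y <-> adj (act g x) (act g y)).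

Definition simplex_image (act : G -> V -> V) (g : G) (s t : list V) : Prop :=
  forall x, In x t <-> exists y, In y s /\ act g y = x.

Definition finite_pred (P : G -> Prop) : Prop :=
  exists l : list G, forall g, P g -> In g l.

(* the subgroup H acts geometrically on the full subcomplex spanned by Y:
   finite vertex stabilisers and cocompact (finitely many H-orbits of simplices) *)
Definition acts_geometrically (adj : V -> V -> Prop) (act : G -> V -> V)
    (H : G -> Prop) (Y : V -> Prop) : Prop :=
  (forall x, Y x -> finite_pred (fun g => H g /\ act g x = x)) /\
  (exists S : list (list V),
     (forall s, In s S -> is_simplex_in adj Y s) /\
     forall t, is_simplex_in adj Y t ->
       exists s g, In s S /\ H g /\ simplex_image act g s t).

Definition hyperbolic (adj : V -> V -> Prop) (act : G -> V -> V) (h : G) : Prop :=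
  ~ exists s, is_simplex adj s /\ simplex_image act h s s.

Definition translation_length (adj : V -> V -> Prop) (act : G -> V -> V)
    (h : G) (L : nat) : Prop :=
  (exists x, is_dist adj x (act h x) L) /\
  (forall x m, is_dist adj x (act h x) m -> L <= m).

Definition Disp (adj : V -> V -> Prop) (act : G -> V -> V) (K : nat) (h : G) (x : V) : Prop :=
  dist_le adj x (act h x) K.

Definition centralizer (mul : G -> G -> G) (h : G) (g : G) : Prop :=
  mul g h = mul h g.

End Defs.

From Stdlib Require Import List Classical Lia.
Import ListNotations.

(* Commuting with h preserves d(x, h x), so C(h) leaves Disp_K(h) invariant.
   For cocompactness, pick finitely many representatives x0 of the G-orbits of
   vertices.  If g x0 lies in Disp_K(h), then the conjugate g^-1 h g moves x0 by
   at most K; as X is locally finite and stabilisers are finite, only finitely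
   many elements do so, and two elements g, g' with the same conjugate differ by
   g g'^-1 in C(h).  Hence C(h) has finitely many orbits of vertices in
   Disp_K(h), and by local finiteness finitely many orbits of simplices. *)

Lemma finite_pred_weaken {T : Type} (P Q : T -> Prop) :
  (forall x, P x -> Q x) -> finite_pred Q -> finite_pred P.
Proof. intros PQ [l Hl]. exists l. auto. Qed.

Lemma finite_pred_eq {T : Type} (a : T) : finite_pred (fun x => x = a).
Proof. exists [a]. intros x ->. now left. Qed.

Lemma finite_pred_list_union {A B : Type} (l : list A) (R : A -> B -> Prop) :
  (forall a, In a l -> finite_pred (R a)) ->
  finite_pred (fun b => exists a, In a l /\ R a b).
Proof.
  induction l as [|a l IH]; intros HR.
  - exists []. intros x [a' [[] _]].
  - destruct (HR a (or_introl eq_refl)) as [m Hm].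
    destruct IH as [m' Hm']; [intros b Hb; apply HR; now right|].
    exists (m ++ m'). intros x [a' [[<-|Ha'] Hr]]; apply in_or_app.
    + left; auto.
    + right; apply Hm'; eauto.
Qed.

Lemma finite_pred_bind {A B : Type} (P : A -> Prop) (Q : A -> B -> Prop) :
  finite_pred P -> (forall a, P a -> finite_pred (Q a)) ->
  finite_pred (fun b => exists a, P a /\ Q a b).
Proof.
  intros [l Hl] HQ.
  apply (finite_pred_weaken _ (fun b => exists a, In a l /\ (P a /\ Q a b))).
  - intros b [a [Pa Qab]]. exists a. auto.
  - apply finite_pred_list_union. intros a _.
    destruct (classic (P a)) as [Pa|nPa].
    + apply (finite_pred_weaken _ (Q a)); [tauto|auto].
    + exists []. intros b [Pa _]. contradiction.
Qed.

Lemma list_choice {A B : Type} (l : list A) (P : A -> B -> Prop) :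
  exists m : list B,
    (forall b, In b m -> exists a, In a l /\ P a b) /\
    (forall a, In a l -> (exists b, P a b) -> exists b, In b m /\ P a b).
Proof.
  induction l as [|a l [m [Hm1 Hm2]]].
  - exists []. split; intros ? [].
  - destruct (classic (exists b, P a b)) as [[b Hb]|nb].
    + exists (b :: m). split.
      * intros b' [<-|Hb']; [exists a; simpl; auto|].
        destruct (Hm1 b' Hb') as [a' [? ?]]. exists a'. simpl; auto.
      * intros a' [<-|Ha'] Hex; [exists b; simpl; auto|].
        destruct (Hm2 a' Ha' Hex) as [b' [? ?]]. exists b'. simpl; auto.
    + exists m. split.
      * intros b' Hb'. destruct (Hm1 b' Hb') as [a' [? ?]]. exists a'. simpl; auto.
      * intros a' [<-|Ha'] Hex; [contradiction|auto].
Qed.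

Fixpoint sublists {A : Type} (l : list A) : list (list A) :=
  match l with
  | [] => [[]]
  | a :: l' => sublists l' ++ map (cons a) (sublists l')
  end.

Lemma sublists_spec {A : Type} (l : list A) (P : A -> Prop) :
  exists s, In s (sublists l) /\ forall v, In v s <-> In v l /\ P v.
Proof.
  induction l as [|a l [s [Hs Hv]]].
  - exists []. split; [now left|]. simpl. tauto.
  - simpl. destruct (classic (P a)).
    + exists (a :: s). split; [apply in_or_app; right; now apply in_map|].
      intros v. simpl. rewrite Hv. split; [intros [<-|]|intros [[<-|] ?]]; tauto.
    + exists s. split; [apply in_or_app; now left|].
      intros v. rewrite Hv. split; [tauto|intros [[<-|] ?]; tauto].
Qed.

Section LocallyFiniteGraph.

Variables (V : Type) (adj : V -> V -> Prop).
Hypothesis adj_finite : forall v, finite_pred (adj v).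

Lemma finite_walk_ends n v : finite_pred (walk adj n v).
Proof.
  revert v; induction n as [|n IH]; intros v.
  - apply (finite_pred_weaken _ (fun z => z = v)); [|apply finite_pred_eq].
    intros z Hz. now inversion Hz.
  - apply (finite_pred_weaken _ (fun z => exists y, adj v y /\ walk adj n y z)).
    + intros z Hz. inversion Hz; subst. eauto.
    + now apply finite_pred_bind.
Qed.

Lemma finite_ball v K : finite_pred (fun z => dist_le adj v z K).
Proof.
  apply (finite_pred_weaken _ (fun z => exists n, In n (seq 0 (S K)) /\ walk adj n v z)).
  - intros z [n [Hn W]]. exists n. split; auto. apply in_seq. lia.
  - apply finite_pred_list_union. intros n _. apply finite_walk_ends.
Qed.

End LocallyFiniteGraph.

Lemma is_simplex_in_eq_elements {V : Type} (adj : V -> V -> Prop) (Y : V -> Prop)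
    (s t : list V) :
  (forall v, In v s <-> In v t) -> is_simplex_in adj Y s -> is_simplex_in adj Y t.
Proof.
  intros st [[Hne Hpw] HY]. repeat split.
  - intros ->. destruct s as [|x s]; [contradiction|].
    exact (proj1 (st x) (or_introl eq_refl)).
  - intros x y Hx Hy. apply Hpw; now apply st.
  - intros x Hx. apply HY, st, Hx.
Qed.

Section Group.

Variables (G : Type) (mul : G -> G -> G) (one : G) (inv : G -> G).
Hypothesis group : is_group mul one inv.

Lemma mulKg a b : mul (inv a) (mul a b) = b.
Proof.
  destruct group as [assoc [unit inverse]].
  now rewrite assoc, (proj1 (inverse a)), (proj1 (unit b)).
Qed.

Lemma mulKVg a b : mul a (mul (inv a) b) = b.
Proof.
  destruct group as [assoc [unit inverse]].
  now rewrite assoc, (proj2 (inverse a)), (proj1 (unit b)).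
Qed.

Lemma mulgK a b : mul (mul b a) (inv a) = b.
Proof.
  destruct group as [assoc [unit inverse]].
  now rewrite <- assoc, (proj2 (inverse a)), (proj2 (unit b)).
Qed.

Lemma mulgKV a b : mul (mul b (inv a)) a = b.
Proof.
  destruct group as [assoc [unit inverse]].
  now rewrite <- assoc, (proj1 (inverse a)), (proj2 (unit b)).
Qed.

Lemma centralizer_inv h c : centralizer mul h c -> centralizer mul h (inv c).
Proof.
  unfold centralizer. intros hc. destruct group as [assoc _].
  now rewrite <- (mulgK c (mul (inv c) h)), <- (assoc (inv c) h c), <- hc, mulKg.
Qed.

Lemma centralizer_of_eq_conj h g g' :
  mul (inv g') (mul h g') = mul (inv g) (mul h g) ->
  centralizer mul h (mul g (inv g')).
Proof.
  unfold centralizer. intros E. destruct group as [assoc _].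
  rewrite <- (mulgK g' (mul (mul g (inv g')) h)), <- (assoc _ h g'),
    <- (assoc g (inv g') _), E, mulKVg.
  now rewrite assoc.
Qed.

End Group.

Section Action.

Variables (G V : Type) (mul : G -> G -> G) (one : G) (inv : G -> G).
Variables (adj : V -> V -> Prop) (act : G -> V -> V).
Hypothesis group : is_group mul one inv.
Hypothesis action : is_simplicial_action mul one adj act.

Lemma act_mul g h x : act (mul g h) x = act g (act h x).
Proof. apply action. Qed.

Lemma actK g x : act (inv g) (act g x) = x.
Proof.
  destruct group as [_ [_ inverse]]. destruct action as [act_one _].
  now rewrite <- act_mul, (proj1 (inverse g)), act_one.
Qed.

Lemma actKV g x : act g (act (inv g) x) = x.
Proof.
  destruct group as [_ [_ inverse]]. destruct action as [act_one _].
  now rewrite <- act_mul, (proj2 (inverse g)), act_one.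
Qed.

Lemma adj_act g x y : adj x y -> adj (act g x) (act g y).
Proof. apply action. Qed.

Lemma walk_act g n x y : walk adj n x y -> walk adj n (act g x) (act g y).
Proof.
  induction 1; [constructor|].
  econstructor; [apply adj_act|]; eauto.
Qed.

Lemma dist_le_act g x y K : dist_le adj x y K -> dist_le adj (act g x) (act g y) K.
Proof. intros [n [nK W]]. exists n. split; [exact nK|]. now apply walk_act. Qed.

Lemma Disp_act_centralizer K h g :
  centralizer mul h g -> forall x, Disp adj act K h x -> Disp adj act K h (act g x).
Proof.
  unfold Disp. intros hg x Hx.
  replace (act h (act g x)) with (act g (act h x)); [now apply dist_le_act|].
  now rewrite <- !act_mul, hg.
Qed.

Lemma is_simplex_in_map_act (Y : V -> Prop) g t :
  (forall x, Y x -> Y (act g x)) ->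
  is_simplex_in adj Y t -> is_simplex_in adj Y (map (act g) t).
Proof.
  intros HYg [[Hne Hpw] HY]. repeat split.
  - destruct t; [contradiction|discriminate].
  - intros x y Hx Hy.
    apply in_map_iff in Hx as [x0 [<- Hx0]]. apply in_map_iff in Hy as [y0 [<- Hy0]].
    destruct (Hpw x0 y0 Hx0 Hy0) as [<-|Hxy]; [now left|right; now apply adj_act].
  - intros x Hx. apply in_map_iff in Hx as [x0 [<- Hx0]]. auto.
Qed.

Lemma simplex_image_inv_map g s t :
  (forall v, In v s <-> In v (map (act (inv g)) t)) -> simplex_image act g s t.
Proof.
  intros Hs x. split.
  - intros Hx. exists (act (inv g) x). split; [apply Hs, in_map, Hx|apply actKV].
  - intros [y [Hy <-]]. apply Hs, in_map_iff in Hy as [x [<- Hx]]. now rewrite actKV.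
Qed.

(* Translate the first vertex of a simplex to a representative r; its other
   vertices then lie in the finite closed neighbourhood of the representatives. *)
Lemma finite_simplex_orbits (H : G -> Prop) (Y : V -> Prop) (reps : list V) :
  (forall c, H c -> H (inv c)) ->
  (forall c, H c -> forall x, Y x -> Y (act c x)) ->
  (forall v, finite_pred (adj v)) ->
  (forall x, Y x -> exists c r, H c /\ In r reps /\ act c r = x) ->
  exists S : list (list V),
    (forall s, In s S -> is_simplex_in adj Y s) /\
    forall t, is_simplex_in adj Y t ->
      exists s c, In s S /\ H c /\ simplex_image act c s t.
Proof.
  intros H_inv HY adj_finite Hreps.
  destruct (finite_pred_list_union reps (fun r v => v = r \/ adj r v)) as [N HN].
  { intros r _. destruct (adj_finite r) as [l Hl].
    exists (r :: l). intros v [->|Hv]; simpl; auto. }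
  destruct (list_choice (sublists N) (fun s s' => s' = s /\ is_simplex_in adj Y s))
    as [S [HS1 HS2]].
  exists S. split.
  { intros s Hs. destruct (HS1 s Hs) as [? [_ [<- ?]]]. assumption. }
  intros t Ht. destruct t as [|x t0]; [now destruct Ht as [[] _]|].
  pose proof Ht as [[_ Hpw] HtY].
  destruct (Hreps x (HtY x (or_introl eq_refl))) as [c [r [Hc [Hr <-]]]].
  set (t' := map (act (inv c)) (act c r :: t0)).
  assert (Ht' : is_simplex_in adj Y t').
  { apply is_simplex_in_map_act; [apply HY, H_inv, Hc|exact Ht]. }
  assert (t'N : forall v, In v t' -> In v N).
  { intros v Hv. apply in_map_iff in Hv as [y [<- Hy]]. apply HN. exists r.
    split; [exact Hr|].
    destruct (Hpw _ y (or_introl eq_refl) Hy) as [<-|Hry]; [left; now rewrite actK|].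
    right. rewrite <- (actK c r) at 1. now apply adj_act. }
  destruct (sublists_spec N (fun v => In v t')) as [s [Hs Hsv]].
  assert (st' : forall v, In v s <-> In v t') by (intros v; rewrite Hsv; intuition).
  exists s, c. split; [|split; [exact Hc|now apply simplex_image_inv_map]].
  destruct (HS2 s Hs) as [s' [Hs' [-> _]]]; [|exact Hs'].
  exists s. split; [reflexivity|].
  apply (is_simplex_in_eq_elements _ _ t'); [|exact Ht']. intros v. now rewrite st'.
Qed.

Section Geometric.

Hypothesis adj_sym : forall x y, adj x y -> adj y x.
Variable S0 : list (list V).
Hypothesis stabilizer_finite : forall x, finite_pred (fun g => act g x = x).
Hypothesis S0_covers :
  forall t, is_simplex adj t -> exists s g, In s S0 /\ simplex_image act g s t.

Lemma finite_transporters a v : finite_pred (fun g => act g a = v).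
Proof.
  destruct (classic (exists g0, act g0 a = v)) as [[g0 Hg0]|none].
  - destruct (stabilizer_finite a) as [l Hl]. exists (map (mul g0) l). intros g Hg.
    replace g with (mul g0 (mul (inv g0) g)).
    + apply in_map, Hl. now rewrite act_mul, Hg, <- Hg0, actK.
    + destruct group as [assoc [unit inverse]].
      now rewrite assoc, (proj2 (inverse g0)), (proj1 (unit g)).
  - exists []. intros g Hg. apply none. eauto.
Qed.

(* An edge [v; w] is g s for some s in S0, so w = g b with b in s and g a = v. *)
Lemma locally_finite v : finite_pred (adj v).
Proof.
  apply (finite_pred_weaken _ (fun w => exists s, In s S0 /\ exists a, In a s /\
     exists g, act g a = v /\ exists b, In b s /\ act g b = w)).
  - intros w vw.
    assert (Hedge : is_simplex adj [v; w]).
    { split; [discriminate|]. intros x y [<-|[<-|[]]] [<-|[<-|[]]]; auto. }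
    destruct (S0_covers _ Hedge) as [s [g [Hs Him]]].
    destruct (proj1 (Him v) (or_introl eq_refl)) as [a [Ha Hav]].
    destruct (proj1 (Him w) (or_intror (or_introl eq_refl))) as [b [Hb Hbw]].
    exists s. split; [exact Hs|]. exists a. split; [exact Ha|].
    exists g. split; [exact Hav|]. exists b. auto.
  - apply finite_pred_list_union; intros s Hs.
    apply finite_pred_list_union; intros a Ha.
    apply finite_pred_bind; [apply finite_transporters|]. intros g _.
    apply finite_pred_list_union. intros b _.
    apply (finite_pred_weaken _ _ (fun x H => eq_sym H) (finite_pred_eq (act g b))).
Qed.

Lemma finite_vertex_orbits : exists X0, forall x, exists g x0, In x0 X0 /\ act g x0 = x.
Proof.
  exists (concat S0). intros x.
  assert (Hx : is_simplex adj [x]).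
  { split; [discriminate|]. intros a b [<-|[]] [<-|[]]. now left. }
  destruct (S0_covers _ Hx) as [s [g [Hs Him]]].
  destruct (proj1 (Him x) (or_introl eq_refl)) as [a [Ha Hax]].
  exists g, a. split; [apply in_concat; eauto|exact Hax].
Qed.

Lemma finite_displacing K x0 : finite_pred (fun k => dist_le adj x0 (act k x0) K).
Proof.
  apply (finite_pred_weaken _ (fun k => exists y, dist_le adj x0 y K /\ act k x0 = y)).
  - eauto.
  - apply finite_pred_bind; [apply finite_ball, locally_finite|].
    intros y _. apply finite_transporters.
Qed.

Lemma Disp_finite_orbits K h :
  exists reps, forall x, Disp adj act K h x ->
    exists c r, centralizer mul h c /\ In r reps /\ act c r = x.
Proof.
  destruct finite_vertex_orbits as [X0 HX0].
  destruct (finite_pred_bind (fun x0 => In x0 X0)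
    (fun x0 p => exists k, dist_le adj x0 (act k x0) K /\ (x0, k) = p)) as [pairs Hpairs].
  { exists X0. auto. }
  { intros x0 _. apply finite_pred_bind; [apply finite_displacing|].
    intros k _. apply (finite_pred_weaken _ _ (fun p E => eq_sym E) (finite_pred_eq _)). }
  destruct (list_choice pairs
    (fun p r => exists g, mul (inv g) (mul h g) = snd p /\ act g (fst p) = r))
    as [reps [_ Hreps]].
  exists reps. intros x Hx. destruct (HX0 x) as [g [x0 [Hx0 <-]]].
  set (k := mul (inv g) (mul h g)).
  assert (Hk : dist_le adj x0 (act k x0) K).
  { unfold k. rewrite !act_mul. rewrite <- (actK g x0) at 1. now apply dist_le_act. }
  destruct (Hreps (x0, k)) as [r [Hr [g' [Eg' <-]]]].
  { apply Hpairs. exists x0. split; [exact Hx0|]. exists k. auto. }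
  { exists (act g x0), g. auto. }
  exists (mul g (inv g')), (act g' x0). split; [now apply (centralizer_of_eq_conj _ _ _ _ group)|].
  split; [exact Hr|]. now rewrite <- act_mul, (mulgKV _ _ _ _ group).
Qed.

End Geometric.

End Action.

Theorem theorem4p3 (G V : Type) (mul : G -> G -> G) (one : G) (inv : G -> G)
    (adj : V -> V -> Prop) (act : G -> V -> V) :
  is_group mul one inv ->
  systolic adj ->
  is_simplicial_action mul one adj act ->
  acts_geometrically adj act (fun _ => True) (fun _ => True) ->
  forall h : G, hyperbolic adj act h ->
  forall L K : nat, translation_length adj act h L -> L <= K ->
  (forall g, centralizer mul h g ->
     forall x, Disp adj act K h x -> Disp adj act K h (act g x)) /\
  acts_geometrically adj act (centralizer mul h) (Disp adj act K h).
Proof.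
  intros group [[adj_sym _] _] action [stab [S0 [_ S0_covers]]] h _ L K _ _.
  assert (stab_finite : forall x, finite_pred (fun g => act g x = x)).
  { intros x. apply (finite_pred_weaken _ _ (fun g Hg => conj I Hg) (stab x I)). }
  assert (covers : forall t, is_simplex adj t ->
            exists s g, In s S0 /\ simplex_image act g s t).
  { intros t Ht. destruct (S0_covers t (conj Ht (fun _ _ => I))) as [s [g [? [_ ?]]]].
    eauto. }
  pose proof (Disp_act_centralizer _ _ _ _ _ _ action K h) as invariant.
  split; [exact invariant|]. split.
  - intros x _. apply (finite_pred_weaken _ _ (fun g Hg => proj2 Hg) (stab_finite x)).
  - destruct (Disp_finite_orbits _ _ _ _ _ _ _ group action adj_sym S0 stab_finite covers K h)
      as [reps Hreps].
    apply (finite_simplex_orbits _ _ _ _ _ _ _ group action _ _ reps); auto.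
    + apply (centralizer_inv _ _ _ _ group).
    + apply (locally_finite _ _ _ _ _ _ _ group action adj_sym S0 stab_finite covers).
Qed.
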